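(* Let $\mathcal{T}_0$ be a triangulation of a finite point set $\mathcal{P}$ in the plane and let $F=\langle f_1,\ldots,f_r\rangle$ be a valid sequence of flips with $\mathcal{T}_0 \xrightarrow{F} \mathcal{T}_r$. For any ordering $(C_1,\ldots,C_\ell)$ of the (weakly connected) components of $\mathcal{D}_F$, there is a permutation $\pi(F)$ of the flips in $F$ such that $\mathcal{T}_0 \xrightarrow{\pi(F)} \mathcal{T}_r$ and such that for any flips $f_i\in C_t$ and $f_j\in C_s$ with $1\le t<s\le \ell$, $f_i$ appears before $f_j$ in $\pi(F)$. That is, the flips of each component appear as a consecutive block in $\pi(F)$, and the blocks appear in the given order of their components.
   Context: A triangulation of a finite point set $\mathcal{P}$ in the plane is a partition of the convex hull of $\mathcal{P}$ into triangles whose vertex set is $\mathcal{P}$. For an interior edge $e$ of a triangulation $\mathcal{T}$, the quadrilateral associated with $e$ is the union of the two triangles of $\mathcal{T}$ sharing $e$. A flip $f$ with underlying edge $\epsilon(f)=e$ is admissible in $\mathcal{T}$ if $e\in\mathcal{T}$ and its associated quadrilateral is convex; performing it replaces $e$ by the other diagonal $\phi(f)$ of that quadrilateral. Two distinct edges share a triangle in $\mathcal{T}$ if they are edges of the same triangle of $\mathcal{T}$. A sequence $F=\langle f_1,\ldots,f_r\rangle$ is valid with respect to $\mathcal{T}$ if there are triangulations $\mathcal{T}_0=\mathcal{T},\mathcal{T}_1,\ldots,\mathcal{T}_r$ such that $f_i$ is admissible in $\mathcal{T}_{i-1}$ and performing it yields $\mathcal{T}_i$; then we write $\mathcal{T}\xrightarrow{F}\mathcal{T}_r$.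 Flips in a sequence are distinct objects even if they have the same underlying edge. For $1\le i<j\le r$, flip $f_j$ is adjacent to $f_i$ (written $f_i\to f_j$) if (1) either $\phi(f_i)=\epsilon(f_j)$ or $\phi(f_i)$ and $\epsilon(f_j)$ share a triangle in $\mathcal{T}_{j-1}$, and (2) there is no $p$ with $i<p<j$ and $\epsilon(f_p)=\phi(f_i)$. $\mathcal{D}_F$ is the directed acyclic graph whose nodes are the flips of $F$ and whose arcs are the pairs $f_i\to f_j$. A component of a directed graph means a weakly connected component (connected component of the underlying undirected graph). *)

From mathcomp Require Import all_boot all_order all_fingroup all_algebra.
Set Implicit Arguments. Unset Strict Implicit. Unset Printing Implicit Defensive.
Import Order.TTheory GRing.Theory Num.Theory.
Local Open Scope ring_scope.

Section Geometry.
Variable R : realFieldType.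
Variable n : nat.
(* the point set P = { p i | i < n }, p injective *)
Variable p : 'I_n -> R * R.

Definition orient (a b c : R * R) : R :=
  (b.1 - a.1) * (c.2 - a.2) - (b.2 - a.2) * (c.1 - a.1).

Definition nondeg (t : {set 'I_n}) : Prop :=
  exists a b c, t = [set a; b; c] /\ orient (p a) (p b) (p c) != 0.

Definition in_tri_closed (t : {set 'I_n}) (q : R * R) : Prop :=
  exists a b c, t = [set a; b; c] /\
    let s := orient (p a) (p b) (p c) in
    [/\ s != 0, 0 <= orient (p a) (p b) q * s,
        0 <= orient (p b) (p c) q * s & 0 <= orient (p c) (p a) q * s].

Definition in_tri_open (t : {set 'I_n}) (q : R * R) : Prop :=
  exists a b c, t = [set a; b; c] /\
    let s := orient (p a) (p b) (p c) in
    [/\ s != 0, 0 < orient (p a) (p b) q * s,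
        0 < orient (p b) (p c) q * s & 0 < orient (p c) (p a) q * s].

Definition in_hull (q : R * R) : Prop :=
  exists w : 'I_n -> R, [/\ forall i, 0 <= w i, \sum_i w i = 1 &
    q = (\sum_i w i * (p i).1, \sum_i w i * (p i).2)].

(* T is a triangulation of P: non-degenerate triangles with vertices in P,
   pairwise disjoint interiors, covering exactly conv(P), and no point of P
   lies in a triangle except at its vertices (so the vertex set is P and the
   triangles meet face-to-face). *)
Definition triangulation (T : {set {set 'I_n}}) : Prop :=
  [/\ forall t, t \in T -> nondeg t,
      forall t1 t2, t1 \in T -> t2 \in T -> t1 != t2 ->
        forall q, ~ (in_tri_open t1 q /\ in_tri_open t2 q),
      forall q, in_hull q <-> exists2 t, t \in T & in_tri_closed t q
    & forall t i, t \in T -> in_tri_closed t (p i) -> i \in t].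

Definition is_edge (T : {set {set 'I_n}}) (e : {set 'I_n}) : bool :=
  (#|e| == 2)%N && [exists t in T, e \subset t].

Definition share_tri (T : {set {set 'I_n}}) (e1 e2 : {set 'I_n}) : bool :=
  [&& e1 != e2, is_edge T e1, is_edge T e2 &
      [exists t in T, (e1 \subset t) && (e2 \subset t)]].

(* the quadrilateral with diagonals e and e' is (strictly) convex:
   the two diagonals cross at a point interior to both *)
Definition convex_quad (e e' : {set 'I_n}) : Prop :=
  exists a b c d, [/\ e = [set a; b], e' = [set c; d],
    orient (p a) (p b) (p c) * orient (p a) (p b) (p d) < 0 &
    orient (p c) (p d) (p a) * orient (p c) (p d) (p b) < 0].

(* a flip f = (epsilon f, phi f): underlying edge and the new diagonal *)
Definition flip := ({set 'I_n} * {set 'I_n})%type.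
Definition flip0 : flip := (set0, set0).

Definition admissible (T : {set {set 'I_n}}) (f : flip) : Prop :=
  [/\ is_edge T f.1 /\ #|[set t in T | f.1 \subset t]| = 2%N,
      #|f.2| = 2%N, [disjoint f.1 & f.2],
      forall x, x \in f.2 -> f.1 :|: [set x] \in T
    & convex_quad f.1 f.2].

Definition perform (T : {set {set 'I_n}}) (f : flip) : {set {set 'I_n}} :=
  [set t in T | ~~ (f.1 \subset t)] :|: [set f.2 :|: [set x] | x in f.1].

(* T_k : the triangulation after the first k flips of F *)
Definition trs (T0 : {set {set 'I_n}}) (F : seq flip) (k : nat) :=
  foldl perform T0 (take k F).

Definition valid (T0 : {set {set 'I_n}}) (F : seq flip) : Prop :=
  (forall k, (k < size F)%N ->
     triangulation (trs T0 F k) /\ admissible (trs T0 F k) (nth flip0 F k))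
  /\ triangulation (trs T0 F (size F)).

(* arcs of D_F (0-indexed: flip j is performed in trs T0 F j = T_{j-1}) *)
Definition adj (T0 : {set {set 'I_n}}) (F : seq flip) (i j : 'I_(size F)) : bool :=
  let phi_i := (nth flip0 F i).2 in
  let eps_j := (nth flip0 F j).1 in
  [&& (i < j)%N,
      (phi_i == eps_j) || share_tri (trs T0 F j) phi_i eps_j &
      [forall k : 'I_(size F), ((i < k)%N && (k < j)%N) ==> ((nth flip0 F k).1 != phi_i)]].

Definition wadj (T0 : {set {set 'I_n}}) (F : seq flip) : rel 'I_(size F) :=
  fun i j => adj T0 i j || adj T0 j i.

Definition component (T0 : {set {set 'I_n}}) (F : seq flip) (i : 'I_(size F))
  : {set 'I_(size F)} := [set j | connect (wadj T0 (F:=F)) i j].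

Definition components (T0 : {set {set 'I_n}}) (F : seq flip)
  : {set {set 'I_(size F)}} := [set component T0 i | i : 'I_(size F)].

(* the sequence of flips F permuted: position k of the new sequence holds the
   flip f_{s^-1 k}, i.e. flip f_i is moved to position s i *)
Definition permute_flips (F : seq flip) (s : {perm 'I_(size F)}) : seq flip :=
  [seq nth flip0 F ((s^-1)%g k) | k <- enum 'I_(size F)].

End Geometry.

(* If a flip [g] is performed right after a flip [f] and is not adjacent to it in
   D_F, the two can be exchanged: [g] is admissible before [f], [f] is still
   admissible after [g], the final triangulation is unchanged, and every arc of D
   for the new sequence comes from an arc of D_F, hence still joins flips of one
   component.  Geometrically this rests on two facts: flipping the diagonal of a
   convex quadrilateral of a triangulation yields a triangulation, and an edge
   lies in at most two triangles.  Bubble-sorting F by the position of each flip's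
   component in the given ordering only exchanges adjacent flips of different
   components, which are never adjacent in D, and each exchange strictly
   increases the sum over the flips of position times rank, so the sort ends
   with every component forming one block, in the given order. *)

From mathcomp Require Import all_boot all_order all_fingroup all_algebra.
From mathcomp Require Import ring lra zify.
Set Implicit Arguments. Unset Strict Implicit. Unset Printing Implicit Defensive.
Import Order.TTheory GRing.Theory Num.Theory.
Local Open Scope ring_scope.

Section Orientation.
Variable R : realFieldType.
Implicit Types (a b c d q : R * R) (x y : R).

Lemma orient_cycle a b c : orient a b c = orient b c a.
Proof. by rewrite /orient; ring. Qed.

Lemma orient_swapl a b c : orient b a c = - orient a b c.
Proof. by rewrite /orient; ring. Qed.

Lemma sqr_gt0 x : x != 0 -> 0 < x * x.
Proof. by move=> x0; rewrite -expr2 exprn_even_gt0. Qed.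

Lemma mul_self_ge0 x : 0 <= x * x.
Proof. by rewrite -expr2 sqr_ge0. Qed.

Lemma mul_sqr_ge0 x y : y != 0 -> (0 <= x * (y * y)) = (0 <= x).
Proof. by move=> y0; rewrite pmulr_lge0 // sqr_gt0. Qed.

Definition tri_sign (r : pred R) a b c q :=
  let s := orient a b c in
  [/\ s != 0, r (orient a b q * s), r (orient b c q * s) & r (orient c a q * s)].

Lemma tri_sign_cycle r a b c q : tri_sign r a b c q -> tri_sign r b c a q.
Proof. by rewrite /tri_sign -(orient_cycle a b c) => -[]. Qed.

Lemma tri_sign_swap r a b c q : tri_sign r a b c q -> tri_sign r b a c q.
Proof.
rewrite /tri_sign (orient_swapl a b c) (orient_swapl a b q) (orient_swapl c a q).
by rewrite (orient_swapl b c q) oppr_eq0 !mulrNN; case.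
Qed.

Lemma tri_sign_perm (r : pred R) a b c q : tri_sign r a b c q ->
  [/\ tri_sign r b c a q, tri_sign r c a b q, tri_sign r b a c q,
      tri_sign r a c b q & tri_sign r c b a q].
Proof.
move=> H; have H1 := tri_sign_cycle H; have H2 := tri_sign_cycle H1.
by split => //; apply: tri_sign_swap.
Qed.

Lemma tri_sign_neq r a b c q : tri_sign r a b c q -> [/\ a != b, b != c & c != a].
Proof.
case=> s0 _ _ _; split; apply: contraNneq s0 => ->; apply/eqP; rewrite /orient; ring.
Qed.

End Orientation.

Notation tri_closed := (tri_sign (fun x => 0 <= x)).
Notation tri_open := (tri_sign (fun x => 0 < x)).

Section Convexity.
Variable R : realFieldType.
Implicit Types (a b c d q : R * R) (x y : R).

Lemma tri_open_closed a b c q : tri_open a b c q -> tri_closed a b c q.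
Proof. by case=> s0 h1 h2 h3; split => //; apply: ltW. Qed.

Definition crossing a b c d :=
  orient a b c * orient a b d < 0 /\ orient c d a * orient c d b < 0.

Lemma crossing_sym a b c d : crossing a b c d -> crossing c d a b.
Proof. by case. Qed.

Lemma crossing_swapl a b c d : crossing a b c d -> crossing b a c d.
Proof. by case=> h1 h2; split; [rewrite !(orient_swapl a b) mulrNN | rewrite mulrC]. Qed.

Lemma crossing_swapr a b c d : crossing a b c d -> crossing a b d c.
Proof. by move/crossing_sym/crossing_swapl/crossing_sym. Qed.

Lemma crossing_sign x1 x2 y1 y2 :
  x2 - x1 + y2 - y1 = 0 -> x1 * x2 < 0 -> y1 * y2 < 0 -> x1 * y1 < 0.
Proof.
move=> E hx hy; have [x1p|x1n|x10] := ltrgtP 0 x1; last first.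
- by move: hx; rewrite -x10 mul0r ltxx.
- have x2p : 0 < x2 by rewrite -(nmulr_rlt0 _ x1n).
  have [y1n|y1p] := ltP 0 y1; first by rewrite nmulr_rlt0.
  have y2n : y2 < 0 by lra.
  by move: hy; rewrite ltNge mulr_le0 // ltW.
- have x2n : x2 < 0 by rewrite -(pmulr_rlt0 _ x1p).
  have [y1n|y1p] := ltP y1 0; first by rewrite pmulr_rlt0.
  have y2p : 0 < y2 by lra.
  by move: hy; rewrite ltNge mulr_ge0 // ltW.
Qed.

Lemma crossing_tri_cover a b c d q : crossing a b c d ->
  tri_closed c d a q -> tri_closed a b c q \/ tri_closed a b d q.
Proof.
move=> [H1 H2] [R0 Hcd Hda Hac]; rewrite /= in Hcd Hda Hac.
set S1 := orient a b c in H1 *; set S2 := orient a b d in H1 *.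
set R1 := orient c d a in H2 R0 Hcd Hda Hac *.
set R2 := orient c d b in H2 *.
have E : R2 - R1 + S2 - S1 = 0 by rewrite /R1 /R2 /S1 /S2 /orient; ring.
have RS1 : R1 * S1 < 0 by apply: crossing_sign E H2 H1.
have RS2 : R2 * S2 < 0.
  by apply: (@crossing_sign R2 R1 S2 S1); [lra | rewrite mulrC | rewrite mulrC].
have S10 : S1 != 0 by apply: contraTneq H1 => ->; rewrite mul0r ltxx.
have S20 : S2 != 0 by apply: contraTneq H1 => ->; rewrite mulr0 ltxx.
have R20 : R2 != 0 by apply: contraTneq H2 => ->; rewrite mulr0 ltxx.
have R2S1 : 0 <= R2 * S1.
  rewrite -(mul_sqr_ge0 _ R0) (_ : _ * _ = (R1 * R2) * (R1 * S1)); last by ring.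
  by rewrite ltW // nmulr_rgt0.
have R1S2 : 0 <= R1 * S2.
  rewrite -(mul_sqr_ge0 _ R20) (_ : _ * _ = (R1 * R2) * (R2 * S2)); last by ring.
  by rewrite ltW // nmulr_rgt0.
(* Each required sign is a nonnegative combination of known signs, up to a square factor. *)
have [Hq|Hq] := leP 0 (orient a b q * S1); [left | right]; split => //=.
- rewrite -(mul_sqr_ge0 _ R0) (_ : _ * _ =
    (orient a c q * R1) * (R2 * S1) + (orient c d q * R1) * (S1 * S1)); last first.
    by rewrite /S1 /R1 /R2 /orient; ring.
  by apply: addr_ge0; apply: mulr_ge0; rewrite ?mul_self_ge0.
- rewrite -(mul_sqr_ge0 _ R0) (_ : _ * _ = (orient a c q * R1) * - (R1 * S1)).
    by apply: mulr_ge0; rewrite // oppr_ge0 ltW.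
  by rewrite /S1 /R1 /orient; ring.
- rewrite -(mul_sqr_ge0 _ S10) (_ : _ * _ = - (orient a b q * S1) * - (S1 * S2)).
    by apply: mulr_ge0; rewrite oppr_ge0 ltW.
  by rewrite /S1 /S2; ring.
- rewrite -(mul_sqr_ge0 _ S10) -(mul_sqr_ge0 _ R0) (_ : _ * _ =
    ((orient d a q * R1) * - (R2 * S2) + (orient c d q * R1) * (S2 * S2)) * (S1 * S1)).
    apply: mulr_ge0; last exact: mul_self_ge0.
    by apply: addr_ge0; apply: mulr_ge0; rewrite ?oppr_ge0 ?mul_self_ge0 // ltW.
  by rewrite /S1 /S2 /R1 /R2 /orient; ring.
- rewrite -(mul_sqr_ge0 _ S10) -(mul_sqr_ge0 _ R0) (_ : _ * _ =
    ((orient d a q * R1) * (R1 * S2)) * (S1 * S1)).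
    by rewrite mulr_ge0 ?mul_self_ge0 // mulr_ge0.
  by rewrite /S1 /S2 /R1 /R2 /orient; ring.
Qed.

Lemma crossing_cover a b c d q : crossing a b c d ->
  tri_closed c d a q \/ tri_closed c d b q -> tri_closed a b c q \/ tri_closed a b d q.
Proof.
move=> H [|Hb]; first exact: crossing_tri_cover.
by case: (crossing_tri_cover (crossing_swapl H) Hb) => /tri_sign_swap; [left | right].
Qed.

Lemma small_step_pos (l : seq (R * R)) : all (fun AK => 0 < AK.1) l ->
  exists2 t, 0 < t <= 1 &
    forall t', 0 <= t' <= t -> all (fun AK => 0 < AK.1 + t' * AK.2) l.
Proof.
elim: l => [|[A K] l IH] /=; first by exists 1; rewrite ?ltr01 ?lexx.
case/andP=> A0 /IH[t0 /andP[t00 t01] Hl].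
have K1 : 0 < `|K| + 1 by rewrite ltr_wpDl.
set e := A / (`|K| + 1).
have e0 : 0 < e by rewrite divr_gt0.
have eK : e * (`|K| + 1) = A by rewrite mulfVK ?lt0r_neq0.
exists (Num.min t0 e); first by rewrite lt_min t00 e0 ge_min t01.
move=> t' /andP[t'0]; rewrite le_min => /andP[t't0 t'e].
rewrite Hl ?t'0 // andbT.
have : t' * - `|K| <= t' * K by rewrite ler_wpM2l // lerNnormlW.
have : t' * `|K| <= e * `|K| by rewrite ler_wpM2r.
nra.
Qed.

Definition interp q g (t : R) := ((1 - t) * q.1 + t * g.1, (1 - t) * q.2 + t * g.2).

Lemma orient_interp a b q g t :
  orient a b (interp q g t) = (1 - t) * orient a b q + t * orient a b g.
Proof. by rewrite /orient /interp /=; ring. Qed.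

(* Push [q] slightly towards the centroid of [abc]. *)
Lemma tri_closed_open_meet a b c u v w q : tri_closed a b c q -> tri_open u v w q ->
  exists q', tri_open a b c q' /\ tri_open u v w q'.
Proof.
move=> [s0 Ha Hb Hc] [s'0 Hu Hv Hw]; rewrite /= in Ha Hb Hc Hu Hv Hw.
set s := orient a b c in s0 Ha Hb Hc *; set s' := orient u v w in s'0 Hu Hv Hw *.
pose g := ((a.1 + b.1 + c.1) / 3, (a.2 + b.2 + c.2) / 3).
have n3 : (3 : R) != 0 by rewrite pnatr_eq0.
have Eab : orient a b g = s / 3 by rewrite /s /orient /g /=; field.
have Ebc : orient b c g = s / 3 by rewrite /s /orient /g /=; field.
have Eca : orient c a g = s / 3 by rewrite /s /orient /g /=; field.
case: (small_step_pos (l := [::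
    (orient u v q * s', orient u v g * s' - orient u v q * s');
    (orient v w q * s', orient v w g * s' - orient v w q * s');
    (orient w u q * s', orient w u g * s' - orient w u q * s')])) => [|t /andP[t0 t1]].
  by rewrite /= Hu Hv Hw.
move=> /(_ t); rewrite lexx ltW //= andbT => /(_ isT) /and3P[H1 H2 H3].
have toward_g X : 0 <= X * s -> 0 < ((1 - t) * X + t * (s / 3)) * s.
  move=> HX; rewrite mulrDl -!mulrA; apply: ltr_wpDl; first by rewrite mulr_ge0 ?subr_ge0.
  by rewrite mulr_gt0 // mulrCA mulr_gt0 ?invr_gt0 ?ltr0n ?sqr_gt0.
exists (interp q g t); split; split => //=; rewrite !orient_interp -/s -/s'.
- by rewrite Eab toward_g.
- by rewrite Ebc toward_g.
- by rewrite Eca toward_g.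
- by rewrite (_ : _ * _ = orient u v q * s' + t * (orient u v g * s' - orient u v q * s')) //; ring.
- by rewrite (_ : _ * _ = orient v w q * s' + t * (orient v w g * s' - orient v w q * s')) //; ring.
- by rewrite (_ : _ * _ = orient w u q * s' + t * (orient w u g * s' - orient w u q * s')) //; ring.
Qed.

(* Two triangles on the same side of a common edge [ab] overlap near its midpoint. *)
Lemma same_side_tri_open_meet a b u v : 0 < orient a b u * orient a b v ->
  exists q, tri_open a b u q /\ tri_open a b v q.
Proof.
move=> H; set su := orient a b u in H *; set sv := orient a b v in H *.
have su0 : su != 0 by apply: contraTneq H => ->; rewrite mul0r ltxx.
have sv0 : sv != 0 by apply: contraTneq H => ->; rewrite mulr0 ltxx.
have n2 : (2 : R) != 0 by rewrite pnatr_eq0.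
pose q (t : R) := ((1 - 2 * t) / 2 * (a.1 + b.1) + t * u.1 + t * v.1,
                   (1 - 2 * t) / 2 * (a.2 + b.2) + t * u.2 + t * v.2).
have half X : 0 < X -> 0 < X / 2 by move=> X0; rewrite divr_gt0 ?ltr0n.
case: (small_step_pos (l := [::
    (su * su / 2, orient b u v * su - su * su); (su * su / 2, orient u a v * su - su * su);
    (sv * sv / 2, orient b v u * sv - sv * sv); (sv * sv / 2, orient v a u * sv - sv * sv)]))
  => [|t /andP[t0 _]].
  by rewrite /= !half ?sqr_gt0.
move=> /(_ t); rewrite lexx ltW //= andbT => /(_ isT) /and4P[H1 H2 H3 H4].
exists (q t); split; split => //=.
- rewrite (_ : _ * _ = t * (su * su + su * sv)); last by rewrite /su /sv /q /orient /=; field.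
  by rewrite mulr_gt0 // addr_gt0 ?sqr_gt0.
- by rewrite (_ : _ * _ = su * su / 2 + t * (orient b u v * su - su * su)) //;
    rewrite /su /q /orient /=; field.
- by rewrite (_ : _ * _ = su * su / 2 + t * (orient u a v * su - su * su)) //;
    rewrite /su /q /orient /=; field.
- rewrite (_ : _ * _ = t * (sv * sv + su * sv)); last by rewrite /su /sv /q /orient /=; field.
  by rewrite mulr_gt0 // addr_gt0 ?sqr_gt0.
- by rewrite (_ : _ * _ = sv * sv / 2 + t * (orient b v u * sv - sv * sv)) //;
    rewrite /sv /q /orient /=; field.
- by rewrite (_ : _ * _ = sv * sv / 2 + t * (orient v a u * sv - sv * sv)) //;
    rewrite /sv /q /orient /=; field.
Qed.

End Convexity.

Section SmallSets.
Variable V : finType.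
Implicit Types a b c d u v x y z : V.

Lemma set3P x a b c : reflect [\/ x = a, x = b | x = c] (x \in [set a; b; c]).
Proof.
rewrite !inE; apply: (iffP idP) => [/orP[/orP[]|]|[]] /eqP; last 3 first.
- by move=> ->.
- by move=> ->; rewrite orbT.
- by move=> ->; rewrite orbT.
all: by move=> ->; constructor.
Qed.

Lemma set31 a b c : a \in [set a; b; c]. Proof. by rewrite !inE eqxx. Qed.
Lemma set32 a b c : b \in [set a; b; c]. Proof. by rewrite !inE eqxx orbT. Qed.
Lemma set33 a b c : c \in [set a; b; c]. Proof. by rewrite !inE eqxx orbT. Qed.

Lemma set3_neq a b u v : u != v -> u \notin [set a; b] -> [set a; b; u] != [set a; b; v].
Proof.
move=> uv uab; apply: contraNneq uab => E.
have : u \in [set a; b; v] by rewrite -E set33.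
by rewrite !inE (negbTE uv) orbF.
Qed.

Lemma eq_set2_cases a b a' b' : [set a; b] = [set a'; b'] -> a != b ->
  (a' = a /\ b' = b) \/ (a' = b /\ b' = a).
Proof.
move=> E ab.
have /set2P Ha : a' \in [set a; b] by rewrite E set21.
have /set2P Hb : b' \in [set a; b] by rewrite E set22.
have Ea : a \in [set a'; b'] by rewrite -E set21.
have Eb : b \in [set a'; b'] by rewrite -E set22.
move: Ea Eb; case: Ha => ->; case: Hb => -> Ea Eb.
- by move: Eb; rewrite !inE orbb => /eqP E'; rewrite E' eqxx in ab.
- by left.
- by right.
- by move: Ea; rewrite !inE orbb => /eqP E'; rewrite E' eqxx in ab.
Qed.

Lemma set2_sub_eq a b c d : c != d -> a \in [set c; d] -> b \in [set c; d] -> a != b ->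
  [set a; b] = [set c; d].
Proof.
move=> cd ha hb ab; apply/eqP; rewrite eqEcard !cards2 ab cd andbT.
by rewrite subUset !sub1set ha hb.
Qed.

Lemma mem_set3_neq y a b z : y \in [set a; b; z] -> y != z -> y \in [set a; b].
Proof. by rewrite !inE => /orP[// | /eqP->]; rewrite eqxx. Qed.

End SmallSets.

Section Triangles.
Variable R : realFieldType.
Variable n : nat.
Variable p : 'I_n -> R * R.
Implicit Types (a b c d u v w x y z : 'I_n) (q : R * R) (t : {set 'I_n}).
Implicit Type T : {set {set 'I_n}}.

Lemma tri_sign_set r a b c a' b' c' q : [set a; b; c] = [set a'; b'; c'] ->
  tri_sign r (p a') (p b') (p c') q -> tri_sign r (p a) (p b) (p c) q.
Proof.
move=> E H; have [] := tri_sign_neq H.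
have /set3P Ha : a' \in [set a; b; c] by rewrite E set31.
have /set3P Hb : b' \in [set a; b; c] by rewrite E set32.
have /set3P Hc : c' \in [set a; b; c] by rewrite E set33.
move: H; case: Ha => ->; case: Hb => ->; case: Hc => -> H; rewrite ?eqxx //.
all: by case: (tri_sign_perm H).
Qed.

Lemma in_tri_closed3 a b c q :
  in_tri_closed p [set a; b; c] q <-> tri_closed (p a) (p b) (p c) q.
Proof. by split=> [[a' [b' [c' [E H]]]] | H]; [apply: tri_sign_set E H | exists a, b, c]. Qed.

Lemma in_tri_open3 a b c q :
  in_tri_open p [set a; b; c] q <-> tri_open (p a) (p b) (p c) q.
Proof. by split=> [[a' [b' [c' [E H]]]] | H]; [apply: tri_sign_set E H | exists a, b, c]. Qed.

Lemma nondeg3 a b c : nondeg p [set a; b; c] -> orient (p a) (p b) (p c) != 0.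
Proof.
case=> a' [b' [c' [E H]]].
suff [] : tri_sign predT (p a) (p b) (p c) (p a) by [].
by apply: tri_sign_set E _; split.
Qed.

Lemma shared_edge_opposite T a b u v : triangulation p T ->
  [set a; b; u] \in T -> [set a; b; v] \in T -> u != v ->
  orient (p a) (p b) (p u) * orient (p a) (p b) (p v) < 0.
Proof.
case=> Hnd Hdj _ _ Tu Tv uv.
have nu := nondeg3 (Hnd _ Tu); have nv := nondeg3 (Hnd _ Tv).
rewrite ltNge le_eqVlt eq_sym mulf_eq0 negb_or (negbTE nu) (negbTE nv) /=.
apply/negP => /same_side_tri_open_meet[q [Qu Qv]].
have uab : u \notin [set a; b].
  by rewrite !inE; apply: contra nu => /orP[]/eqP->; apply/eqP; rewrite /orient; ring.
by apply: (Hdj _ _ Tu Tv (set3_neq uv uab) q); split; apply/in_tri_open3.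
Qed.

Lemma no_three_tris_on_edge T a b x y z : triangulation p T ->
  [set a; b; x] \in T -> [set a; b; y] \in T -> [set a; b; z] \in T ->
  x != y -> y != z -> x != z -> False.
Proof.
move=> HT Tx Ty Tz xy yz xz.
have Hxy := shared_edge_opposite HT Tx Ty xy.
have Hyz := shared_edge_opposite HT Ty Tz yz.
have Hxz := shared_edge_opposite HT Tx Tz xz.
have /sqr_gt0 Hy : orient (p a) (p b) (p y) != 0 by apply: contraTneq Hxy => ->; rewrite mulr0 ltxx.
have : 0 < (orient (p a) (p b) (p x) * orient (p a) (p b) (p z)) * (orient (p a) (p b) (p y))^+2.
  by rewrite (_ : _ * _ = (orient (p a) (p b) (p x) * orient (p a) (p b) (p y)) *
    (orient (p a) (p b) (p y) * orient (p a) (p b) (p z))) ?nmulr_rgt0 // mulrC; ring.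
by rewrite pmulr_lgt0 ?expr2 // ltNge ltW.
Qed.

Record flip_quad T a b c d : Prop := FlipQuad {
  flip_quad_ab : a != b;
  flip_quad_cd : c != d;
  flip_quad_c : c \notin [set a; b];
  flip_quad_d : d \notin [set a; b];
  flip_quad_tri_c : [set a; b; c] \in T;
  flip_quad_tri_d : [set a; b; d] \in T;
  flip_quad_tris : forall t, t \in T -> a \in t -> b \in t ->
    t = [set a; b; c] \/ t = [set a; b; d];
  flip_quad_crossing : crossing (p a) (p b) (p c) (p d) }.

Lemma admissible_flip_quad T f : admissible p T f ->
  exists a b c d, f = ([set a; b], [set c; d]) /\ flip_quad T a b c d.
Proof.
case: f => e e'; rewrite /admissible /=.
case=> [[/andP[/cards2P[a [b [ab ->]]] _] HS] /eqP/cards2P[c [d [cd ->]]] Hdisj Hin Hcq].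
exists a, b, c, d; split => //.
have cab : c \notin [set a; b].
  by apply: contraTN Hdisj => Hc; apply/pred0Pn; exists c; rewrite /= Hc set21.
have dab : d \notin [set a; b].
  by apply: contraTN Hdisj => Hd; apply/pred0Pn; exists d; rewrite /= Hd set22.
have Tc : [set a; b; c] \in T by apply: Hin; rewrite set21.
have Td : [set a; b; d] \in T by apply: Hin; rewrite set22.
split => //.
- move=> t tT ta tb.
  have ne : [set a; b; c] != [set a; b; d] by apply: set3_neq.
  have E : [set t0 in T | [set a; b] \subset t0] = [set [set a; b; c]; [set a; b; d]].
    apply/esym/eqP; rewrite eqEcard HS cards2 ne andbT; apply/subsetP => t0.
    by rewrite !inE => /orP[]/eqP->; rewrite ?Tc ?Td subsetUl.
  have : t \in [set t0 in T | [set a; b] \subset t0].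
    by rewrite inE tT subUset !sub1set ta tb.
  by rewrite E => /set2P.
- case: Hcq => a' [b' [c' [d' [E1 E2 H1 H2]]]].
  have H : crossing (p a') (p b') (p c') (p d') by [].
  case: (eq_set2_cases E1 ab) => -[? ?]; case: (eq_set2_cases E2 cd) => -[? ?].
  all: subst a' b' c' d'.
  + exact: H.
  + exact: crossing_swapr.
  + exact: crossing_swapl.
  + exact: crossing_swapl (crossing_swapr H).
Qed.

Lemma flip_quad_admissible T a b c d :
  flip_quad T a b c d -> admissible p T ([set a; b], [set c; d]).
Proof.
case=> ab cd cab dab Tc Td Uf cross; have ne := set3_neq cd cab.
split=> /=.
- split.
    by rewrite /is_edge cards2 ab; apply/existsP; exists [set a; b; c]; rewrite Tc subsetUl.
  suff -> : [set t in T | [set a; b] \subset t] = [set [set a; b; c]; [set a; b; d]].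
    by rewrite cards2 ne.
  apply/setP => t; rewrite !inE subUset !sub1set.
  apply/andP/orP => [[tT /andP[ta tb]] | [] /eqP->]; last by rewrite Td !inE !eqxx ?orbT.
    by case: (Uf t tT ta tb) => ->; rewrite eqxx ?orbT; [left | right].
  by rewrite Tc !inE !eqxx ?orbT.
- by rewrite cards2 cd.
- by rewrite disjoint_sym disjoint_subset; apply/subsetP => y /set2P[]->; rewrite inE.
- by move=> y /set2P[]->.
- by case: cross; exists a, b, c, d.
Qed.

Lemma eq_flip_quad T T' a b c d :
  (forall t, a \in t -> b \in t -> (t \in T) = (t \in T')) ->
  flip_quad T a b c d -> flip_quad T' a b c d.
Proof.
move=> E [ab cd cab dab Tc Td Uf cross]; split => //.
- by rewrite -E // !inE !eqxx ?orbT.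
- by rewrite -E // !inE !eqxx ?orbT.
- by move=> t tT' ta tb; apply: Uf; rewrite ?E.
Qed.

End Triangles.

Section Perform.
Variable n : nat.
Implicit Types (a b c d u v w x y : 'I_n) (t : {set 'I_n}) (T : {set {set 'I_n}}) (f : flip n).

Lemma mem_perform T a b c d t : t \in perform T ([set a; b], [set c; d]) =
  [|| (t \in T) && ~~ ((a \in t) && (b \in t)), t == [set c; d; a] | t == [set c; d; b]].
Proof.
rewrite /perform /= in_setU in_set subUset !sub1set imsetU !imset_set1 in_setU !in_set1.
by rewrite orbA.
Qed.

Lemma perform_old T f t : t \in T -> ~~ (f.1 \subset t) -> t \in perform T f.
Proof. by rewrite /perform in_setU in_set => -> ->. Qed.

(* Two flips commute as soon as neither removes a triangle created by the other. *)
Lemma perform_comm T a b c d u v w x :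
  (forall y, y \in [set a; b] -> ~~ ((u \in [set c; d; y]) && (v \in [set c; d; y]))) ->
  (forall y, y \in [set u; v] -> ~~ ((a \in [set w; x; y]) && (b \in [set w; x; y]))) ->
  perform (perform T ([set a; b], [set c; d])) ([set u; v], [set w; x]) =
  perform (perform T ([set u; v], [set w; x])) ([set a; b], [set c; d]).
Proof.
move=> Hab Huv; apply/setP => t; rewrite !mem_perform.
have [-> | n1] := eqVneq t [set c; d; a].
  by rewrite (negbTE (Hab a _)) ?set21 // !orbT.
have [-> | n2] := eqVneq t [set c; d; b].
  by rewrite (negbTE (Hab b _)) ?set22 // !orbT.
have [-> | m1] := eqVneq t [set w; x; u].
  by rewrite (negbTE (Huv u _)) ?set21 // !orbT.
have [-> | m2] := eqVneq t [set w; x; v].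
  by rewrite (negbTE (Huv v _)) ?set22 // !orbT.
by rewrite !orbF andbAC.
Qed.

Lemma share_tri_intro T (e1 e2 : {set 'I_n}) t : e1 != e2 -> #|e1| = 2%N -> #|e2| = 2%N ->
  t \in T -> e1 \subset t -> e2 \subset t -> share_tri T e1 e2.
Proof.
move=> ne c1 c2 tT s1 s2; apply/and4P; split => //.
- by rewrite /is_edge c1 eqxx; apply/existsP; exists t; rewrite tT.
- by rewrite /is_edge c2 eqxx; apply/existsP; exists t; rewrite tT.
- by apply/existsP; exists t; rewrite tT s1.
Qed.

Lemma share_tri_sub T T' (e1 e2 : {set 'I_n}) :
  (forall t, t \in T -> e1 \subset t -> e2 \subset t -> t \in T') ->
  share_tri T e1 e2 -> share_tri T' e1 e2.
Proof.
move=> H /and4P[ne /andP[c1 _] /andP[c2 _] /existsP[t /andP[tT /andP[s1 s2]]]].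
by apply: (share_tri_intro (t := t)); rewrite ?(eqP c1) ?(eqP c2) ?H.
Qed.

End Perform.

Section PerformFlip.
Variable R : realFieldType.
Variable n : nat.
Variable p : 'I_n -> R * R.
Variables (T : {set {set 'I_n}}) (a b c d : 'I_n).
Hypotheses (HT : triangulation p T) (Hq : flip_quad p T a b c d).
Implicit Types (x : 'I_n) (q : R * R) (t : {set 'I_n}).

Local Notation T' := (perform T ([set a; b], [set c; d])).

Let cross := flip_quad_crossing Hq.

Lemma flip_quad_cover q :
  (tri_closed (p c) (p d) (p a) q \/ tri_closed (p c) (p d) (p b) q) <->
  (tri_closed (p a) (p b) (p c) q \/ tri_closed (p a) (p b) (p d) q).
Proof. by split; apply: crossing_cover; last apply: crossing_sym. Qed.

Lemma perform_nondeg t : t \in T' -> nondeg p t.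
Proof.
have [Hnd _ _ _] := HT.
have [_ ] := cross; rewrite mulr_lt0 => /and3P[Ha Hb _].
rewrite mem_perform => /or3P[/andP[/Hnd] | /eqP-> | /eqP->] //.
- by exists c, d, a.
- by exists c, d, b.
Qed.

(* [cdx] is covered by [abc] and [abd], whose interiors avoid that of [t]. *)
Lemma new_old_tri_disjoint x t q : x \in [set a; b] -> t \in T ->
  ~~ ((a \in t) && (b \in t)) ->
  in_tri_open p [set c; d; x] q -> in_tri_open p t q -> False.
Proof.
case: HT => _ Hdj _ _ Hx tT nab /in_tri_open3 /tri_open_closed Hnew [a' [b' [c' [Et Ht]]]].
have Hold : tri_closed (p a) (p b) (p c) q \/ tri_closed (p a) (p b) (p d) q.
  by apply/flip_quad_cover; case/set2P: Hx Hnew => -> ; [left | right].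
have ne z : [set a; b; z] != t by apply: contraNneq nab => <-; rewrite !inE !eqxx ?orbT.
case: Hold => /tri_closed_open_meet /(_ Ht) [q' [Q1 Q2]].
- apply: (Hdj _ _ (flip_quad_tri_c Hq) tT (ne _) q').
  by split; [apply/in_tri_open3 | exists a', b', c'].
- apply: (Hdj _ _ (flip_quad_tri_d Hq) tT (ne _) q').
  by split; [apply/in_tri_open3 | exists a', b', c'].
Qed.

Lemma new_tris_disjoint q :
  in_tri_open p [set c; d; a] q -> in_tri_open p [set c; d; b] q -> False.
Proof.
move=> /in_tri_open3[_ Ha _ _] /in_tri_open3[_ Hb _ _]; rewrite /= in Ha Hb.
have [_ H2] := cross; move: (mulr_gt0 Ha Hb); apply/negP; rewrite -leNgt.
by rewrite mulrACA mulr_ge0_le0 ?mul_self_ge0 ?ltW.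
Qed.

Lemma perform_disjoint t1 t2 : t1 \in T' -> t2 \in T' -> t1 != t2 ->
  forall q, ~ (in_tri_open p t1 q /\ in_tri_open p t2 q).
Proof.
have [_ Hdj _ _] := HT; have sa := set21 a b; have sb := set22 a b.
rewrite !mem_perform => Ht1 Ht2 t12 q [Ho1 Ho2].
case/or3P: Ht1 => [/andP[t1T n1] | /eqP E1 | /eqP E1];
case/or3P: Ht2 => [/andP[t2T n2] | /eqP E2 | /eqP E2]; subst.
all: try by rewrite eqxx in t12.
all: by [ apply: (Hdj _ _ t1T t2T t12 q)
        | apply: (new_old_tri_disjoint _ t1T n1 Ho2 Ho1)
        | apply: (new_old_tri_disjoint _ t2T n2 Ho1 Ho2)
        | apply: (new_tris_disjoint Ho1 Ho2) | apply: (new_tris_disjoint Ho2 Ho1) ].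
Qed.

Lemma perform_cover q : in_hull p q <-> exists2 t, t \in T' & in_tri_closed p t q.
Proof.
have [_ _ Hcov _] := HT; rewrite Hcov; split=> -[t].
- case: (boolP ((a \in t) && (b \in t))) => [/andP[ta tb] tT Hc | nab tT Hc]; last first.
    by exists t; rewrite // mem_perform tT nab.
  have Hold : tri_closed (p a) (p b) (p c) q \/ tri_closed (p a) (p b) (p d) q.
    by move: Hc; case: (flip_quad_tris Hq tT ta tb) => -> /in_tri_closed3; [left | right].
  case/flip_quad_cover: Hold => Hnew.
  + by exists [set c; d; a]; [rewrite mem_perform eqxx orbT | apply/in_tri_closed3].
  + by exists [set c; d; b]; [rewrite mem_perform eqxx !orbT | apply/in_tri_closed3].
- rewrite mem_perform => /or3P[/andP[tT _] Hc | /eqP-> | /eqP->]; first by exists t.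
  all: move=> /in_tri_closed3 Hc.
  all: have [H|H] : tri_closed (p a) (p b) (p c) q \/ tri_closed (p a) (p b) (p d) q
    by apply/flip_quad_cover; auto.
  all: by [exists [set a; b; c]; [exact: (flip_quad_tri_c Hq) | apply/in_tri_closed3]
          | exists [set a; b; d]; [exact: (flip_quad_tri_d Hq) | apply/in_tri_closed3]].
Qed.

(* A point of [P] in a new triangle [cdx] is a vertex of [abc] or [abd], and it is
   not the other end of [ab], which lies across the diagonal [cd] from [x]. *)
Lemma perform_vertex t i : t \in T' -> in_tri_closed p t (p i) -> i \in t.
Proof.
have [_ _ _ Hvert] := HT; have [_ H2] := cross.
have old_vertex : tri_closed (p a) (p b) (p c) (p i) \/ tri_closed (p a) (p b) (p d) (p i) ->
    [\/ i = a, i = b, i = c | i = d].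
  case=> /in_tri_closed3 H;
    [have := Hvert _ _ (flip_quad_tri_c Hq) H | have := Hvert _ _ (flip_quad_tri_d Hq) H];
    by case/set3P => ->; by [apply: Or41 | apply: Or42 | apply: Or43 | apply: Or44].
rewrite mem_perform => /or3P[/andP[tT _] | /eqP-> | /eqP->]; first exact: Hvert.
- move=> /in_tri_closed3 Hc; have [_ Hi _ _] := Hc; move: Hi.
  case: (old_vertex (proj1 (flip_quad_cover _) (or_introl Hc))) => ->; rewrite !inE ?eqxx ?orbT //.
  by rewrite /= mulrC leNgt H2.
- move=> /in_tri_closed3 Hc; have [_ Hi _ _] := Hc; move: Hi.
  case: (old_vertex (proj1 (flip_quad_cover _) (or_intror Hc))) => ->; rewrite !inE ?eqxx ?orbT //.
  by rewrite /= leNgt H2.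
Qed.

Lemma perform_triangulation : triangulation p T'.
Proof.
split; [exact: perform_nondeg | exact: perform_disjoint | exact: perform_cover |
       exact: perform_vertex].
Qed.

End PerformFlip.

Lemma triangulation_perform (R : realFieldType) n (p : 'I_n -> R * R) T f :
  triangulation p T -> admissible p T f -> triangulation p (perform T f).
Proof.
by move=> HT /admissible_flip_quad[a [b [c [d [-> Hq]]]]]; apply: perform_triangulation.
Qed.

Ltac mem_neq := rewrite ?inE; repeat match goal with
  | H : is_true (?x != ?y) |- context [?x == ?y] => rewrite (negbTE H)
  | H : is_true (?x != ?y) |- context [?y == ?x] => rewrite (eq_sym y x) (negbTE H)
  end; rewrite ?eqxx /= ?orbT ?orbF ?andbT ?andbF.

Section Commute.
Variable R : realFieldType.
Variable n : nat.
Variable p : 'I_n -> R * R.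
Variables (T : {set {set 'I_n}}) (a b c d u v w x : 'I_n).
Local Notation T1 := (perform T ([set a; b], [set c; d])).
Local Notation Tg := (perform T ([set u; v], [set w; x])).
Hypotheses (HT : triangulation p T) (Hf : flip_quad p T a b c d) (Hg : flip_quad p T1 u v w x).
Hypothesis cd_uv : [set c; d] != [set u; v].
Hypothesis no_share : ~~ share_tri T1 [set c; d] [set u; v].
Implicit Types (y z : 'I_n) (t : {set 'I_n}).

Let HT1 : triangulation p T1 := perform_triangulation HT Hf.
Let ab : a != b := flip_quad_ab Hf.
Let cd : c != d := flip_quad_cd Hf.
Let uv : u != v := flip_quad_ab Hg.
Let wx : w != x := flip_quad_cd Hg.
Let Tc : [set a; b; c] \in T := flip_quad_tri_c Hf.
Let Td : [set a; b; d] \in T := flip_quad_tri_d Hf.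
Let T1w : [set u; v; w] \in T1 := flip_quad_tri_c Hg.
Let T1x : [set u; v; x] \in T1 := flip_quad_tri_d Hg.
Let ca : c != a. Proof. by have := flip_quad_c Hf; rewrite !inE negb_or => /andP[]. Qed.
Let cb : c != b. Proof. by have := flip_quad_c Hf; rewrite !inE negb_or => /andP[]. Qed.
Let da : d != a. Proof. by have := flip_quad_d Hf; rewrite !inE negb_or => /andP[]. Qed.
Let db : d != b. Proof. by have := flip_quad_d Hf; rewrite !inE negb_or => /andP[]. Qed.

Lemma T1_no_ab t : t \in T1 -> ~~ ((a \in t) && (b \in t)).
Proof. by rewrite mem_perform => /or3P[/andP[_ //] | /eqP-> | /eqP->]; mem_neq. Qed.

Lemma new_tri_no_uv y : y \in [set a; b] ->
  ~~ ((u \in [set c; d; y]) && (v \in [set c; d; y])).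
Proof.
move=> yab; apply/negP => /andP[yu yv]; move/negP: no_share; apply.
apply: (share_tri_intro (t := [set c; d; y])) => //; rewrite ?cards2 ?cd ?uv ?subsetUl //.
- by case/set2P: yab => ->; rewrite mem_perform eqxx ?orbT.
- by rewrite subUset !sub1set yu yv.
Qed.

Lemma T1_uv_old t : t \in T1 -> u \in t -> v \in t -> t \in T.
Proof.
rewrite mem_perform => /or3P[/andP[tT _] // | /eqP-> | /eqP->] tu tv.
- by have := new_tri_no_uv (set21 a b); rewrite tu tv.
- by have := new_tri_no_uv (set22 a b); rewrite tu tv.
Qed.

Lemma old_ab_no_uv t : t \in T -> a \in t -> b \in t -> ~~ ((u \in t) && (v \in t)).
Proof.
move=> tT ta tb; apply/negP => /andP[tu tv].
have [y ycd Et] : exists2 y, y \in [set c; d] & t = [set a; b; y].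
  by case: (flip_quad_tris Hf tT ta tb) => ->; [exists c | exists d]; rewrite ?set21 ?set22.
subst t; move: ycd tu tv; case: (boolP (y \in [set u; v])) => [/set2P[]-> | yuv] ycd tu tv.
- have /new_tri_no_uv : v \in [set a; b] by apply: mem_set3_neq tv _; rewrite eq_sym.
  by case/set2P: ycd => ->; mem_neq.
- have /new_tri_no_uv : u \in [set a; b] by apply: mem_set3_neq tu _.
  by case/set2P: ycd => ->; mem_neq.
- move: yuv; rewrite !inE negb_or => /andP[yu yv].
  have Euv : [set u; v] = [set a; b].
    by apply: set2_sub_eq => //;
      [apply: mem_set3_neq tu _ | apply: mem_set3_neq tv _]; rewrite eq_sym.
  by have := T1_no_ab T1w; rewrite Euv !inE !eqxx orbT.
Qed.

Lemma T1_T_uv t : u \in t -> v \in t -> (t \in T1) = (t \in T).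
Proof.
move=> tu tv; apply/idP/idP => [tT1 | tT]; first exact: T1_uv_old tT1 tu tv.
rewrite mem_perform tT /=; case: (boolP ((a \in t) && (b \in t))) => // /andP[ta tb].
by move: (old_ab_no_uv tT ta tb); rewrite tu tv.
Qed.

Lemma flip_quad_g_first : flip_quad p T u v w x.
Proof. by apply: eq_flip_quad Hg => t; apply: T1_T_uv. Qed.

Let HTg : triangulation p Tg := perform_triangulation HT flip_quad_g_first.

Lemma old_ab_in_Tg t : t \in T -> a \in t -> b \in t -> t \in Tg.
Proof. by move=> tT ta tb; rewrite mem_perform tT old_ab_no_uv. Qed.

(* Otherwise [ab] would carry three triangles of [Tg]: [abc], [abd] and [aby] for
   [y] an end of [uv] outside [cd]. *)
Lemma wx_neq_ab : [set w; x] != [set a; b].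
Proof.
apply/eqP => E.
have Tgc := old_ab_in_Tg Tc (set31 _ _ _) (set32 _ _ _).
have Tgd := old_ab_in_Tg Td (set31 _ _ _) (set32 _ _ _).
have [y [yuv yc yd]] : exists y, [/\ y \in [set u; v], y != c & y != d].
  have [ucd | ] := boolP (u \in [set c; d]); last first.
    by rewrite !inE negb_or => /andP[uc ud]; exists u; split; rewrite ?set21.
  have [vcd | ] := boolP (v \in [set c; d]); last first.
    by rewrite !inE negb_or => /andP[vc vd]; exists v; split; rewrite ?set22.
  by move: cd_uv; rewrite (set2_sub_eq cd ucd vcd uv) eqxx.
have Tgy : [set a; b; y] \in Tg.
  by rewrite -E mem_perform; case/set2P: yuv => ->; rewrite eqxx ?orbT.
by apply: (no_three_tris_on_edge HTg Tgc Tgd Tgy cd); rewrite eq_sym.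
Qed.

Let uv_tri z : z \in [set w; x] -> [set u; v; z] \in T1.
Proof. by case/set2P=> ->. Qed.

Lemma new_tri_no_ab y : y \in [set u; v] ->
  ~~ ((a \in [set w; x; y]) && (b \in [set w; x; y])).
Proof.
move=> yuv; apply/negP => /andP[ya yb].
have [/set2P[] Ey | nyab] := boolP (y \in [set a; b]).
- have bwx : b \in [set w; x] by apply: mem_set3_neq yb _; rewrite Ey eq_sym.
  move/negP: (T1_no_ab (uv_tri bwx)); apply; rewrite set33 andbT.
  by apply: (subsetP (subsetUl _ _)); rewrite -Ey.
- have awx : a \in [set w; x] by apply: mem_set3_neq ya _; rewrite Ey.
  move/negP: (T1_no_ab (uv_tri awx)); apply; rewrite set33 /=.
  by apply: (subsetP (subsetUl _ _)); rewrite -Ey.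
- move: nyab; rewrite !inE negb_or => /andP[ya' yb'].
  have awx : a \in [set w; x] by apply: mem_set3_neq ya _; rewrite eq_sym.
  have bwx : b \in [set w; x] by apply: mem_set3_neq yb _; rewrite eq_sym.
  by move: wx_neq_ab; rewrite (set2_sub_eq wx awx bwx ab) eqxx.
Qed.

Lemma Tg_ab_old t : t \in Tg -> a \in t -> b \in t -> t \in T.
Proof.
rewrite mem_perform => /or3P[/andP[tT _] // | /eqP-> | /eqP->] ta tb.
- by have := new_tri_no_ab (set21 u v); rewrite ta tb.
- by have := new_tri_no_ab (set22 u v); rewrite ta tb.
Qed.

Lemma flip_quad_f_second : flip_quad p Tg a b c d.
Proof.
apply: eq_flip_quad Hf => t ta tb.
by apply/idP/idP => [tT | /Tg_ab_old]; [apply: old_ab_in_Tg | apply].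
Qed.

Lemma perform_flips_comm :
  perform T1 ([set u; v], [set w; x]) = perform Tg ([set a; b], [set c; d]).
Proof. exact: perform_comm new_tri_no_uv new_tri_no_ab. Qed.

(* If [wx] and [ab] shared a triangle of [Tg], then [wx = yz] with [y] in [cd]
   and [z] in [ab]; after both flips the edge [yz] would carry the three
   triangles [yzu], [yzv] and [cdz], unless the other end [y'] of [cd] is [u]
   or [v], in which case [uvy] contains both [cd] and [uv] in [T1]. *)
Lemma wx_not_cd_ab y z : y \in [set c; d] -> z \in [set a; b] ->
  [set w; x] = [set y; z] -> False.
Proof.
move=> ycd zab Ewx.
have [y' Ecd] : exists y', [set c; d] = [set y; y'].
  by case/set2P: ycd => ->; [exists d | exists c; rewrite setUC].
have HT2 := perform_triangulation HT1 Hg.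
have ywx : y \in [set w; x] by rewrite Ewx set21.
have [y'uv | ] := boolP (y' \in [set u; v]).
  move/negP: no_share; apply; apply: (share_tri_intro (t := [set u; v; y])).
  - exact: cd_uv.
  - by rewrite cards2 cd.
  - by rewrite cards2 uv.
  - exact: uv_tri.
  - by rewrite Ecd subUset !sub1set set33 (subsetP (subsetUl _ _)).
  - exact: subsetUl.
rewrite !inE negb_or => /andP[y'u y'v].
have newT2 y1 : y1 \in [set u; v] -> [set y; z; y1] \in perform T1 ([set u; v], [set w; x]).
  by rewrite -Ewx mem_perform; case/set2P=> ->; rewrite eqxx ?orbT.
have cdzT2 : [set y; z; y'] \in perform T1 ([set u; v], [set w; x]).
  have -> : [set y; z; y'] = [set c; d; z] by rewrite Ecd setUAC.
  rewrite mem_perform (negbTE (new_tri_no_uv zab)) /= andbT.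
  by case/set2P: zab => ->; rewrite mem_perform eqxx !orbT.
by apply: (no_three_tris_on_edge HT2 (newT2 _ (set21 u v)) (newT2 _ (set22 u v)) cdzT2);
  rewrite // eq_sym.
Qed.

Lemma no_share_wx_ab : ~~ share_tri Tg [set w; x] [set a; b].
Proof.
apply/negP => /and4P[_ _ _ /existsP[t /andP[tTg /andP[]]]].
rewrite !subUset !sub1set => /andP[tw tx] /andP[ta tb].
have [y ycd Et] : exists2 y, y \in [set c; d] & t = [set a; b; y].
  have := flip_quad_tris Hf (Tg_ab_old tTg ta tb) ta tb.
  by case=> ->; [exists c | exists d]; rewrite ?set21 ?set22.
subst t; have [/set2P[] Ey | ywx] := boolP (y \in [set w; x]).
- apply: (wx_not_cd_ab (z := x) ycd); last by rewrite Ey.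
  by apply: mem_set3_neq tx _; rewrite Ey eq_sym.
- apply: (wx_not_cd_ab (z := w) ycd); last by rewrite Ey setUC.
  by apply: mem_set3_neq tw _; rewrite Ey.
- move: ywx; rewrite !inE negb_or => /andP[yw yx].
  have awx : w \in [set a; b] by apply: mem_set3_neq tw _; rewrite eq_sym.
  have bwx : x \in [set a; b] by apply: mem_set3_neq tx _; rewrite eq_sym.
  by move: wx_neq_ab; rewrite (set2_sub_eq ab awx bwx wx) eqxx.
Qed.

Lemma ab_neq_uv : [set a; b] != [set u; v].
Proof.
apply/eqP => E; move/negP: (T1_no_ab T1w); apply.
by rewrite -E set31 (subsetP (subsetUl _ _)) ?set22.
Qed.

Lemma flip_quads_commute :
  [/\ flip_quad p T u v w x, flip_quad p Tg a b c d,
      perform T1 ([set u; v], [set w; x]) = perform Tg ([set a; b], [set c; d]),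
      [set w; x] != [set a; b] /\ ~~ share_tri Tg [set w; x] [set a; b] &
      [/\ forall t, t \in T -> [set a; b] \subset t -> ~~ ([set u; v] \subset t),
          forall t, t \in Tg -> [set a; b] \subset t -> t \in T & [set a; b] != [set u; v]]].
Proof.
split; [exact: flip_quad_g_first | exact: flip_quad_f_second | exact: perform_flips_comm
       | by split; [exact: wx_neq_ab | exact: no_share_wx_ab] | split].
- by move=> t tT; rewrite !subUset !sub1set => /andP[ta tb]; apply: old_ab_no_uv.
- by move=> t tTg; rewrite subUset !sub1set => /andP[ta tb]; apply: Tg_ab_old.
- exact: ab_neq_uv.
Qed.
End Commute.

(* [g], performed right after [f], is not adjacent to [f] in the sense of D_F. *)
Definition no_arc n (T : {set {set 'I_n}}) (f g : flip n) :=
  f.2 != g.1 /\ ~~ share_tri (perform T f) f.2 g.1.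

Section CommuteFlips.
Variable R : realFieldType.
Variable n : nat.
Variable p : 'I_n -> R * R.
Variables (T : {set {set 'I_n}}) (f g : flip n).
Hypotheses (HT : triangulation p T) (Hf : admissible p T f)
  (Hg : admissible p (perform T f) g) (Hfg : no_arc T f g).

Lemma commute_flips :
  [/\ admissible p T g, admissible p (perform T g) f,
      perform (perform T g) f = perform (perform T f) g & no_arc T g f].
Proof.
move: Hf Hg Hfg => /admissible_flip_quad[a [b [c [d [-> Hfq]]]]].
move=> /admissible_flip_quad[u [v [w [x [-> Hgq]]]]] [/= ne nsh].
have [Hg0 Hf1 E Hgf _] := flip_quads_commute HT Hfq Hgq ne nsh.
by split; rewrite ?E //; apply: flip_quad_admissible.
Qed.

Lemma commute_flips_edges :
  [/\ forall t, t \in T -> f.1 \subset t -> ~~ (g.1 \subset t),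
      forall t, t \in perform T g -> f.1 \subset t -> t \in T & f.1 != g.1].
Proof.
move: Hf Hg Hfg => /admissible_flip_quad[a [b [c [d [-> Hfq]]]]].
move=> /admissible_flip_quad[u [v [w [x [-> Hgq]]]]] [/= ne nsh].
by have [_ _ _ _ []] := flip_quads_commute HT Hfq Hgq ne nsh.
Qed.
End CommuteFlips.

Local Close Scope ring_scope.

Section FlipSequences.
Variable n : nat.
Implicit Types (T : {set {set 'I_n}}) (G A B : seq (flip n)) (f g : flip n).

Definition eps G k := (nth (flip0 n) G k).1.
Definition phi G k := (nth (flip0 n) G k).2.

Definition flip_arc T0 G (x y : nat) : Prop :=
  [/\ x < y, y < size G,
      phi G x = eps G y \/ share_tri (trs T0 G y) (phi G x) (eps G y)
    & forall z, x < z -> z < y -> eps G z != phi G x].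

Definition swapS (k z : nat) := if z == k then k.+1 else if z == k.+1 then k else z.

Lemma swapS_cases k z : [\/ z = k /\ swapS k z = k.+1, z = k.+1 /\ swapS k z = k |
  [/\ z != k, z != k.+1 & swapS k z = z]].
Proof.
rewrite /swapS; case: eqP => [-> | /eqP zk]; first exact: Or31.
by case: eqP => [-> | /eqP zk1]; [apply: Or32 | apply: Or33].
Qed.

Lemma swapSK k : involutive (swapS k).
Proof.
move=> z; case: (swapS_cases k z) => [[-> ->] | [-> ->] | [zk zk1 ->]].
- by rewrite /swapS (gtn_eqF (ltnSn k)) eqxx.
- by rewrite /swapS eqxx.
- by rewrite /swapS (negbTE zk) (negbTE zk1).
Qed.

Lemma nth_swapS A B f g z :
  nth (flip0 n) (A ++ g :: f :: B) z = nth (flip0 n) (A ++ f :: g :: B) (swapS (size A) z).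
Proof.
rewrite /swapS; case: (ltngtP z (size A)) => [lt | gt | ->].
- by rewrite (ltn_eqF (ltnW lt : z < (size A).+1)) !nth_cat lt.
- case: eqP => [-> | /eqP ne].
    by rewrite !nth_cat ltnn ltnNge leqnSn /= subnn subSnn.
  rewrite !nth_cat ltnNge (ltnW gt) /=.
  by have -> : z - size A = (z - (size A).+2).+2 by lia.
- by rewrite !nth_cat ltnn ltnNge leqnSn /= subnn subSnn.
Qed.

Lemma trsS T0 G k : k < size G ->
  trs T0 G k.+1 = perform (trs T0 G k) (nth (flip0 n) G k).
Proof. by move=> h; rewrite /trs (take_nth (flip0 n) h) -cats1 foldl_cat. Qed.

Lemma trs_size_cat T0 A B : trs T0 (A ++ B) (size A) = foldl (@perform n) T0 A.
Proof. by rewrite /trs take_size_cat. Qed.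

Lemma trs_swap_prefix T0 A B f g y : y <= size A ->
  trs T0 (A ++ g :: f :: B) y = trs T0 (A ++ f :: g :: B) y.
Proof. by move=> h; rewrite /trs !takel_cat. Qed.

Lemma trs_swap_suffix T0 A B f g y :
  let T := foldl (@perform n) T0 A in
  perform (perform T g) f = perform (perform T f) g -> (size A).+2 <= y ->
  trs T0 (A ++ g :: f :: B) y = trs T0 (A ++ f :: g :: B) y.
Proof.
move=> T E h; rewrite /trs !take_cat ltnNge (leq_trans (leqnSn _) (ltnW h)) /=.
have -> : y - size A = (y - (size A).+2).+2 by lia.
by rewrite /= !foldl_cat /= E.
Qed.

End FlipSequences.

Section SwapAdjacentFlips.
Variable R : realFieldType.
Variable n : nat.
Variable p : 'I_n -> R * R.
Variables (T0 : {set {set 'I_n}}) (A B : seq (flip n)) (f g : flip n).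
Local Notation G := (A ++ f :: g :: B).
Local Notation G' := (A ++ g :: f :: B).
Local Notation k := (size A).
Local Notation T := (foldl (@perform n) T0 A).
Hypothesis HG : valid p T0 G.
Hypothesis not_arc : ~ flip_arc T0 G k k.+1.

Let sizeG : size G = k + (size B).+2. Proof. by rewrite size_cat. Qed.
Let sizeG' : size G' = size G. Proof. by rewrite !size_cat. Qed.
Let nth_k : nth (flip0 n) G k = f. Proof. by rewrite nth_cat ltnn subnn. Qed.
Let nth_k1 : nth (flip0 n) G k.+1 = g. Proof. by rewrite nth_cat ltnNge leqnSn /= subSnn. Qed.
Let kG : k.+1 < size G. Proof. by rewrite sizeG; lia. Qed.
Let trs_k : trs T0 G k = T. Proof. exact: trs_size_cat. Qed.
Let trs_k1 : trs T0 G k.+1 = perform T f. Proof. by rewrite trsS 1?ltnW // nth_k trs_k. Qed.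

Let HT : triangulation p T. Proof. by have := HG.1 k (ltnW kG); rewrite trs_k => -[]. Qed.
Let Hf : admissible p T f. Proof. by have := HG.1 k (ltnW kG); rewrite trs_k nth_k => -[]. Qed.
Let Hg : admissible p (perform T f) g.
Proof. by have := HG.1 k.+1 kG; rewrite trs_k1 nth_k1 => -[]. Qed.

Lemma swap_no_arc : no_arc T f g.
Proof.
have arc_fg : phi G k = eps G k.+1 \/ share_tri (trs T0 G k.+1) (phi G k) (eps G k.+1) ->
    flip_arc T0 G k k.+1 by move=> H; split=> // z kz zk; lia.
rewrite /phi /eps nth_k nth_k1 trs_k1 in arc_fg.
split; first by apply/eqP => E; apply: not_arc; apply: arc_fg; left.
by apply/negP => sh; apply: not_arc; apply: arc_fg; right.
Qed.

Let commute := commute_flips HT Hf Hg swap_no_arc.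
Let edges := commute_flips_edges HT Hf Hg swap_no_arc.

Let trs_swap y : y != k.+1 -> trs T0 G' y = trs T0 G y.
Proof.
move=> yk; case: (leqP y k) => h; first exact: trs_swap_prefix.
by case: commute => _ _ E _; apply: trs_swap_suffix => //; lia.
Qed.


Let swapS_k : swapS k k = k.+1. Proof. by rewrite /swapS eqxx. Qed.
Let swapS_k1 : swapS k k.+1 = k. Proof. by rewrite /swapS (gtn_eqF (ltnSn k)) eqxx. Qed.
Let swapS_id z : z != k -> z != k.+1 -> swapS k z = z.
Proof. by move=> h1 h2; rewrite /swapS (negbTE h1) (negbTE h2). Qed.
Let trs'_k1 : trs T0 G' k.+1 = perform T g.
Proof. by rewrite trsS ?sizeG' ?(ltnW kG) // trs_swap_prefix // nth_swapS swapS_k nth_k1 trs_k. Qed.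

Let eps_k : eps G k = f.1. Proof. by rewrite /eps nth_k. Qed.
Let eps_k1 : eps G k.+1 = g.1. Proof. by rewrite /eps nth_k1. Qed.
Let k_neq_k1 : k != k.+1. Proof. by rewrite neq_ltn ltnSn. Qed.

Let eps' z : eps G' z = eps G (swapS k z). Proof. by rewrite /eps nth_swapS. Qed.
Let phi' z : phi G' z = phi G (swapS k z). Proof. by rewrite /phi nth_swapS. Qed.

Lemma swap_final : trs T0 G' (size G) = trs T0 G (size G).
Proof. by apply: trs_swap; rewrite sizeG; lia. Qed.

Lemma swap_valid : valid p T0 G'.
Proof.
split; last by rewrite sizeG' swap_final; exact: HG.2.
move=> y; rewrite sizeG' => yG; rewrite nth_swapS.
have [-> | yk1] := eqVneq y k.+1.
  rewrite trs'_k1 swapS_k1 nth_k; case: commute => Hg0 Hf1 _ _.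
  by split; [apply: triangulation_perform | ].
rewrite trs_swap //; have [-> | yk] := eqVneq y k.
  by rewrite swapS_k nth_k1 trs_k; case: commute.
by rewrite swapS_id //; apply: HG.1.
Qed.

Lemma swap_arc_to_f x : flip_arc T0 G' x k.+1 -> flip_arc T0 G x k.
Proof.
case=> xk _ c1 c2; have [Ex | xk'] := eqVneq x k.
  subst x; case: commute => _ _ _ [ne nsh]; exfalso; move: c1.
  rewrite phi' eps' swapS_k swapS_k1 /phi /eps nth_k nth_k1 trs'_k1.
  by case=> [E | sh]; [move/eqP: ne | move/negP: nsh].
have xk0 : x < k by lia.
have sx : swapS k x = x by rewrite swapS_id //; lia.
have [_ C _] := edges.
split => //; first by rewrite ltnW.
- move: c1; rewrite phi' eps' sx swapS_k1 trs'_k1 trs_k => -[E | sh]; [by left | right].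
  by apply: (share_tri_sub _ sh) => t tTg _; rewrite /eps nth_k; apply: C.
- move=> z xz zk; have := c2 z xz (ltnW zk).
  by rewrite phi' eps' !swapS_id //; lia.
Qed.

Lemma swap_arc_to_g x : flip_arc T0 G' x k -> flip_arc T0 G x k.+1.
Proof.
case=> xk _ c1 c2; have sx : swapS k x = x by rewrite swapS_id //; lia.
have [B' _ ne] := edges.
have f_g_no_tri t : t \in T -> f.1 \subset t -> eps G k.+1 \subset t -> False.
  by move=> tT ft; rewrite eps_k1; apply/negP; apply: B'.
move: c1; rewrite phi' eps' sx swapS_k trs_swap // trs_k => c1.
split => //; first exact: ltnW.
- case: c1 => [E | sh]; [by left | right]; rewrite trs_k1.
  apply: (share_tri_sub _ sh) => t tT _ gt; apply: perform_old => //.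
  by apply/negP => ft; apply: (f_g_no_tri t).
- move=> z xz zk1; have [-> | zk] := eqVneq z k.
    rewrite eps_k; case: c1 => [-> | /and4P[_ _ _ /existsP[t /andP[tT /andP[ft gt]]]]].
      by rewrite eps_k1.
    by apply/eqP => E; apply: (f_g_no_tri t); rewrite ?E.
  have zk' : z < k by lia.
  by move: (c2 z xz zk'); rewrite eps' phi' sx swapS_id //; lia.
Qed.

Lemma swap_arc_other x y : y != k -> y != k.+1 ->
  flip_arc T0 G' x y -> flip_arc T0 G (swapS k x) y.
Proof.
move=> yk yk1 [xy yG c1 c2].
split; rewrite -?sizeG'.
- by move: xy; case: (swapS_cases k x) => [[-> ->] | [-> ->] | [_ _ ->]]; lia.
- exact: yG.
- by move: c1; rewrite phi' eps' (swapS_id yk yk1) trs_swap.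
- move=> z xz zy; rewrite -[eps G z](congr1 (eps G) (swapSK k z)) -eps' -phi'.
  case: (swapS_cases k x) => [[Ex Ex'] | [Ex Ex'] | [xk xk1 Ex']]; rewrite Ex' in xz.
  + by rewrite swapS_id ?c2 //; lia.
  + have [Ez | zk1] := eqVneq z k.+1.
      by rewrite Ez swapS_k1 phi' eps' swapS_k Ex swapS_k1 /phi /eps nth_k nth_k1 eq_sym;
        case: swap_no_arc.
    by rewrite swapS_id ?c2 //; lia.
  + by apply: c2; move: xz zy; case: (swapS_cases k z) => [[-> ->] | [-> ->] | [_ _ ->]]; lia.
Qed.

Lemma swap_arc x y : flip_arc T0 G' x y -> flip_arc T0 G (swapS k x) (swapS k y).
Proof.
move=> Hxy; have [xy _ _ _] := Hxy.
have [Ey | yk1] := eqVneq y k.+1.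
  subst y; have Hx := swap_arc_to_f Hxy; have [xk _ _ _] := Hx.
  by rewrite swapS_k1 swapS_id //; lia.
have [Ey | yk] := eqVneq y k.
  by subst y; rewrite swapS_k swapS_id; [exact: swap_arc_to_g | lia | lia].
by rewrite (swapS_id yk yk1); apply: swap_arc_other.
Qed.

End SwapAdjacentFlips.

Section Reorder.
Variable R : realFieldType.
Variable n : nat.
Variable p : 'I_n -> R * R.
Variable T0 : {set {set 'I_n}}.
Variable F : seq (flip n).
Variable Cs : seq {set 'I_(size F)}.
Local Notation r := (size F).
Implicit Types (s : {perm 'I_r}) (i j x y : 'I_r).

Lemma size_permute_flips s : size (permute_flips s) = r.
Proof. by rewrite size_map size_enum_ord. Qed.

Lemma nth_permute_flips s i : nth (flip0 n) (permute_flips s) i = nth (flip0 n) F ((s^-1)%g i).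
Proof. by rewrite /permute_flips (nth_map i) ?size_enum_ord // nth_ord_enum. Qed.

Lemma permute_flips1 : permute_flips (1%g : {perm 'I_r}) = F.
Proof.
apply: (@eq_from_nth _ (flip0 n)); first by rewrite size_permute_flips.
move=> x; rewrite size_permute_flips => hx.
by have := nth_permute_flips 1 (Ordinal hx); rewrite /= invg1 perm1.
Qed.

Lemma component_connect i j : connect (wadj T0 (F:=F)) i j -> component T0 i = component T0 j.
Proof.
move=> ij; have sym : connect_sym (wadj T0 (F:=F)).
  by apply: sym_connect_sym => x y; rewrite /wadj orbC.
apply/setP => z; rewrite !inE; apply/idP/idP; apply: connect_trans => //.
by rewrite sym.
Qed.

Lemma flip_arc_adj x y : flip_arc T0 F x y -> adj T0 x y.
Proof.
case=> xy _ c1 c2; rewrite /adj xy /=; apply/andP; split.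
- by case: c1 => [E | sh]; apply/orP; [left; apply/eqP | right].
- by apply/forallP => z; apply/implyP => /andP[h1 h2]; apply: c2.
Qed.

(* The invariant of the bubble sort. *)
Definition sound_order s := [/\ valid p T0 (permute_flips s),
  trs T0 (permute_flips s) r = trs T0 F r &
  forall x y, flip_arc T0 (permute_flips s) x y ->
    component T0 ((s^-1)%g x) = component T0 ((s^-1)%g y)].

Lemma sound_order1 : valid p T0 F -> sound_order 1.
Proof.
move=> HF; rewrite /sound_order permute_flips1; split => // x y; rewrite invg1 !perm1 => h.
by apply: component_connect; apply: connect1; rewrite /wadj flip_arc_adj.
Qed.

Lemma tperm_swapS x y z : val y = (val x).+1 -> val (tperm x y z) = swapS x z.
Proof.
move=> hy; case: tpermP => [-> | -> | /eqP h1 /eqP h2].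
- by rewrite /swapS eqxx.
- by rewrite hy /swapS (gtn_eqF (ltnSn x)) eqxx.
- have h1' : val z != val x by [].
  have h2' : val z != (val x).+1 by rewrite -hy.
  by rewrite /swapS (negbTE h1') (negbTE h2').
Qed.

Lemma sound_order_swap s x y : val y = (val x).+1 ->
  component T0 ((s^-1)%g x) != component T0 ((s^-1)%g y) ->
  sound_order s -> sound_order (s * tperm x y).
Proof.
move=> hy hc [Hv Htr Har].
set G := permute_flips s; set k := val x.
have sG : size G = r by rewrite size_permute_flips.
have kG : k.+1 < size G by rewrite sG /k -hy ltn_ord.
set A := take k G; set f := nth (flip0 n) G k; set g := nth (flip0 n) G k.+1.
set B := drop k.+2 G.
have EG : G = A ++ f :: g :: B.
  by rewrite /A /f /g /B -(drop_nth (flip0 n) kG) -(drop_nth (flip0 n) (ltnW kG)) cat_take_drop.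
have sA : size A = k by rewrite size_take ltnW.
have EG' : permute_flips (s * tperm x y) = A ++ g :: f :: B.
  apply: (@eq_from_nth _ (flip0 n)); first by rewrite size_permute_flips -sG EG !size_cat.
  move=> z; rewrite size_permute_flips => hz.
  rewrite nth_swapS sA -EG.
  have := nth_permute_flips (s * tperm x y) (Ordinal hz); rewrite /= => ->.
  have tz := tperm_swapS (Ordinal hz) hy; rewrite /= in tz.
  by rewrite invgM tpermV permM -tz nth_permute_flips.
have no_arc_fg : ~ flip_arc T0 (A ++ f :: g :: B) (size A) (size A).+1.
  by rewrite -EG sA /k -hy => /Har; apply/eqP.
have HG : valid p T0 (A ++ f :: g :: B) by rewrite -EG.
split; rewrite EG'.
- exact: swap_valid.
- by rewrite -Htr; have := swap_final HG no_arc_fg; rewrite -EG sG.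
- move=> a b /(swap_arc HG no_arc_fg); rewrite -EG sA -(tperm_swapS a hy) -(tperm_swapS b hy).
  by move/Har; rewrite !invgM !tpermV !permM.
Qed.

Definition comp_rank i := index (component T0 i) Cs.

Definition rank_weight s := \sum_i s i * comp_rank i.

Lemma rank_weight_swap s x y : val y = (val x).+1 ->
  comp_rank ((s^-1)%g y) < comp_rank ((s^-1)%g x) -> rank_weight s < rank_weight (s * tperm x y).
Proof.
move=> hy hr; set a := (s^-1)%g x; set b := (s^-1)%g y.
have xy : x != y by apply/eqP => E; move: hy; rewrite E; lia.
have ab : b != a by apply: contraNneq xy => E; rewrite -(permKV s x) -/a -E permKV.
have split2 (G : 'I_r -> nat) :
    \sum_i G i = G a + (G b + \sum_(i | (i != a) && (i != b)) G i).
  by rewrite (bigD1 a) // (bigD1 b) //=.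
rewrite /rank_weight split2 [X in _ < X]split2.
have -> : \sum_(i | (i != a) && (i != b)) s i * comp_rank i =
          \sum_(i | (i != a) && (i != b)) (s * tperm x y)%g i * comp_rank i.
  apply: eq_bigr => i /andP[ia ib]; rewrite permM tpermD //.
  - by apply: contraNneq ia => E; rewrite /a E permK.
  - by apply: contraNneq ib => E; rewrite /b E permK.
rewrite !permM /a /b !permKV tpermL tpermR hy; move: hr; rewrite -/a -/b.
set ra := comp_rank a; set rb := comp_rank b; set S := \sum_(i | _) _.
by rewrite (_ : val x = nat_of_ord x) //; nia.
Qed.

Lemma rank_weight_bound s : rank_weight s <= r * (r * size Cs).
Proof.
rewrite /rank_weight -[r in r * _]card_ord -sum_nat_const; apply: leq_sum => i _.
by apply: leq_mul; [apply: ltnW | apply: index_size].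
Qed.

Definition rank_sorted s := [forall x, forall y,
  (val y == (val x).+1) ==> (comp_rank ((s^-1)%g x) <= comp_rank ((s^-1)%g y))].

Lemma exists_rank_sorted m s : sound_order s -> r * (r * size Cs) - rank_weight s <= m ->
  exists2 s', sound_order s' & rank_sorted s'.
Proof.
elim: m s => [|m IH] s Hs Hm; (case: (boolP (rank_sorted s)) => [sorted_s|]; first by exists s);
  move=> /forallPn[x /forallPn[y]]; rewrite negb_imply -ltnNge => /andP[/eqP hy hr];
  have := rank_weight_swap hy hr; have := rank_weight_bound (s * tperm x y).
- move=> bound incr; move: Hm; rewrite leqn0 subn_eq0 => Hm.
  by move: (leq_trans incr bound); rewrite ltnNge Hm.
- move=> bound incr; apply: (IH _ (sound_order_swap hy _ Hs)); last by lia.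
  by apply: contraTneq hr => E; rewrite /comp_rank E ltnn.
Qed.

Lemma rank_sorted_mono s : rank_sorted s -> forall x y : 'I_r, x <= y ->
  comp_rank ((s^-1)%g x) <= comp_rank ((s^-1)%g y).
Proof.
move=> sorted_s x y /subnKC; move: (y - x) => d; elim: d y => [|d IH] y Ey.
  by rewrite (_ : y = x) //; apply/val_inj; rewrite /= -Ey addn0.
have xd : x + d < r by rewrite -addnS Ey ltnW.
apply: (leq_trans (IH (Ordinal xd) erefl)).
move/forallP: sorted_s => /(_ (Ordinal xd)) /forallP /(_ y) /implyP; apply.
by rewrite /= -Ey addnS.
Qed.

Lemma comp_rank_nth t i : uniq Cs -> (forall C, (C \in Cs) = (C \in components T0 F)) ->
  t < size Cs -> i \in nth set0 Cs t -> comp_rank i = t.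
Proof.
move=> HU HC ht hi; have : nth set0 Cs t \in components T0 F by rewrite -HC mem_nth.
case/imsetP => k _ Ek; rewrite Ek inE in hi.
by rewrite /comp_rank -(component_connect hi) -Ek index_uniq.
Qed.

End Reorder.

Theorem corollary1 (R : realFieldType) (n : nat) (p : 'I_n -> R * R)
    (T0 : {set {set 'I_n}}) (F : seq (flip n))
    (Cs : seq {set 'I_(size F)}) :
  injective p ->
  triangulation p T0 ->
  valid p T0 F ->
  uniq Cs ->
  (forall C, (C \in Cs) = (C \in components T0 F)) ->
  exists s : {perm 'I_(size F)},
    [/\ valid p T0 (permute_flips s),
        trs T0 (permute_flips s) (size F) = trs T0 F (size F)
      & forall (t u : nat) (i j : 'I_(size F)), (t < u < size Cs)%N ->
          i \in nth set0 Cs t -> j \in nth set0 Cs u -> (s i < s j)%N].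
Proof.
move=> _ _ HF HU HC.
have [s [Hv Htr _] sorted_s] :=
  exists_rank_sorted (Cs := Cs) (sound_order1 HF) (leq_subr (rank_weight T0 Cs 1) _).
exists s; split => // t u i j /andP[tu uC] hi hj.
rewrite ltnNge; apply/negP => ji; have := rank_sorted_mono sorted_s ji.
rewrite !permK (comp_rank_nth HU HC uC hj) (comp_rank_nth HU HC (ltn_trans tu uC) hi).
by rewrite leqNgt tu.
Qed.
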